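(* Let $(G,d)$ be a boundedly compact $p$-uniformly convex metric space with $p\in(1,\infty)$ and $c>0$, $\lambda>0$, and $f:G\to\mathbb{R}$ proper, lower semicontinuous and strongly convex with modulus $\mu\ge(2-c)/(p\lambda^{p-1})$. (i) If $x_+=\mathrm{prox}^p_{f,\lambda}(x)$, then $\frac{4}{cp\lambda^{p-1}}\Delta^{(p,c)}(x_+,x,x_+,y)\le f(y)-f(x_+)$ for all $y\in G$. (ii) For all $x,y\in G$, with $x_+=\mathrm{prox}^p_{f,\lambda}(x)$, $y_+=\mathrm{prox}^p_{f,\lambda}(y)$, $$d(x_+,y_+)^p\le d(x,y)^p-\frac{1-\alpha}{\alpha}\psi^{(p,c)}(x,y,x_+,y_+),\qquad\alpha=\frac{c}{2+c}.$$
   Context: $(G,d)$ uniquely geodesic; $(1-\tau)x\oplus\tau y$ is the point on the geodesic from $x$ to $y$ at distance $\tau d(x,y)$ from $x$. $p$-uniform convexity with constant $c$: $d(z,(1-\tau)x\oplus\tau y)^p\le(1-\tau)d(z,x)^p+\tau d(z,y)^p-\frac c2\tau(1-\tau)d(x,y)^p$. $f$ strongly convex with modulus $\mu$: $f((1-\tau)x\oplus\tau y)\le(1-\tau)f(x)+\tau f(y)-\frac\mu2(1-\tau)\tau d(x,y)^p$ for all $\tau\in[0,1]$, $x,y$. $\mathrm{prox}^p_{f,\lambda}(x)=\operatorname{argmin}_{y\in G}\{f(y)+\frac1{p\lambda^{p-1}}d(y,x)^p\}$. $\Delta^{(p,c)}(x,y,u,v)=\frac c4\big(d(x,v)^p+d(y,u)^p-d(x,u)^p-d(y,v)^p\big)$;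 $\psi^{(p,c)}(x,y,u,v)=\frac c2\big(d(x,u)^p+d(y,v)^p+d(u,v)^p+d(x,y)^p-d(y,u)^p-d(x,v)^p\big)$. *)

From Stdlib Require Import Reals Lra List.
Open Scope R_scope.

(* real power t^p for t >= 0, with the convention 0^p = 0 (p > 0) *)
Definition rpow (t p : R) : R := if Rle_dec t 0 then 0 else Rpower t p.

Section MetricDefs.
Context {G : Type} (d : G -> G -> R).

Definition is_metric : Prop :=
  (forall x y, 0 <= d x y) /\
  (forall x y, d x y = 0 <-> x = y) /\
  (forall x y, d x y = d y x) /\
  (forall x y z, d x z <= d x y + d y z).

Definition is_geodesic (x y : G) (g : R -> G) : Prop :=
  g 0 = x /\ g (d x y) = y /\
  forall s t, 0 <= s <= d x y -> 0 <= t <= d x y -> d (g s) (g t) = Rabs (s - t).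

Definition uniquely_geodesic : Prop :=
  forall x y, (exists g, is_geodesic x y g) /\
    forall g1 g2, is_geodesic x y g1 -> is_geodesic x y g2 ->
      forall s, 0 <= s <= d x y -> g1 s = g2 s.

(* z is the point (1-tau) x (+) tau y : the point on the geodesic from x to y
   at distance tau * d x y from x *)
Definition geo_pt (x y : G) (tau : R) (z : G) : Prop :=
  exists g, is_geodesic x y g /\ z = g (tau * d x y).

Definition p_uniformly_convex (p c : R) : Prop :=
  forall x y z tau w, 0 <= tau <= 1 -> geo_pt x y tau w ->
    rpow (d z w) p <= (1 - tau) * rpow (d z x) p + tau * rpow (d z y) p
                      - c / 2 * tau * (1 - tau) * rpow (d x y) p.

Definition is_open (U : G -> Prop) : Prop :=
  forall x, U x -> exists e, 0 < e /\ forall y, d x y < e -> U y.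

Definition is_compact (K : G -> Prop) : Prop :=
  forall (I : Type) (U : I -> G -> Prop), (forall i, is_open (U i)) ->
    (forall x, K x -> exists i, U i x) ->
    exists l : list I, forall x, K x -> exists i, In i l /\ U i x.

Definition boundedly_compact : Prop :=
  forall K : G -> Prop,
    is_open (fun y => ~ K y) ->
    (exists x0 r, forall y, K y -> d x0 y <= r) ->
    is_compact K.

Definition lower_semicontinuous (f : G -> R) : Prop :=
  forall x t, t < f x -> exists e, 0 < e /\ forall y, d x y < e -> t < f y.

Definition strongly_convex (p mu : R) (f : G -> R) : Prop :=
  forall x y tau w, 0 <= tau <= 1 -> geo_pt x y tau w ->
    f w <= (1 - tau) * f x + tau * f y - mu / 2 * (1 - tau) * tau * rpow (d x y) p.

(* z is (the) element of prox^p_{f,lambda}(x) = argmin_y f y + d(y,x)^p/(p lambda^(p-1)) *)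
Definition is_prox (p lam : R) (f : G -> R) (x z : G) : Prop :=
  forall y, f z + 1 / (p * Rpower lam (p - 1)) * rpow (d z x) p
            <= f y + 1 / (p * Rpower lam (p - 1)) * rpow (d y x) p.

Definition Delta_pc (p c : R) (x y u v : G) : R :=
  c / 4 * (rpow (d x v) p + rpow (d y u) p - rpow (d x u) p - rpow (d y v) p).

Definition psi_pc (p c : R) (x y u v : G) : R :=
  c / 2 * (rpow (d x u) p + rpow (d y v) p + rpow (d u v) p + rpow (d x y) p
           - rpow (d y u) p - rpow (d x v) p).

End MetricDefs.

From Stdlib Require Import Reals Lra Psatz.
Open Scope R_scope.

(* Let [x+] minimize [f + k d(., x)^p] and move from [x+] towards [y] along the
   geodesic by a fraction [t].  Comparing the values at [x+] and at the new
   point, with [f] bounded by strong convexity and [d(x, .)^p] by p-uniform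
   convexity, gives the three-point inequality of part (i) up to a factor
   [1 - t]; letting [t] go to [0] removes it.  Adding the three-point
   inequalities of two prox points, each tested at the other, yields part (ii). *)

Lemma rpow_ge0 t p : 0 <= rpow t p.
Proof. unfold rpow; destruct (Rle_dec t 0); [lra | left; apply exp_pos]. Qed.

Lemma rpow_0 p : rpow 0 p = 0.
Proof. unfold rpow; destruct (Rle_dec 0 0); lra. Qed.

Lemma Rle_of_forall_one_minus_mul_le a b :
  (forall t, 0 < t <= 1 -> (1 - t) * b <= a) -> b <= a.
Proof.
  intros H; destruct (Rle_dec b a) as [|Hba]; [assumption|].
  assert (a_ge0 : 0 <= a) by (specialize (H 1); lra).
  set (t := (b - a) / (2 * b)).
  assert (Ht : t * (2 * b) = b - a) by (unfold t; field; lra).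
  assert (t_range : 0 < t <= 1) by (split; nra).
  specialize (H t t_range); nra.
Qed.

Section PenalizedMinimizers.
Variables (G : Type) (d : G -> G -> R) (f : G -> R) (p c mu k : R).
Hypothesis d_sym : forall x y, d x y = d y x.
Hypothesis geodesic_exists : forall x y, exists g, is_geodesic d x y g.
Hypothesis d_unif_convex : p_uniformly_convex d p c.
Hypothesis f_strongly_convex : strongly_convex d p mu f.
Hypothesis k_gt0 : 0 < k.
Hypothesis modulus_large : 2 * k <= mu + k * c.

Definition penalized_min (x z : G) : Prop :=
  forall w, f z + k * rpow (d z x) p <= f w + k * rpow (d w x) p.

Section OneMinimizer.
Variables x z : G.
Hypothesis z_min : penalized_min x z.

Lemma penalized_min_geodesic_step y t : 0 < t <= 1 ->
  (1 - t) * (k * rpow (d z y) p) <= f y - f z - k * (rpow (d x z) p - rpow (d x y) p).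
Proof.
  intros t_range.
  destruct (geodesic_exists z y) as [g g_geo].
  set (w := g (t * d z y)).
  assert (w_geo : geo_pt d z y t w) by (exists g; split; auto).
  set (D := rpow (d z y) p).
  assert (D_ge0 : 0 <= D) by apply rpow_ge0.
  assert (min_w := z_min w); rewrite (d_sym w x), (d_sym z x) in min_w.
  assert (f_w := f_strongly_convex z y t w ltac:(lra) w_geo); fold D in f_w.
  assert (d_w := d_unif_convex z y x t w ltac:(lra) w_geo); fold D in d_w.
  apply Rmult_le_compat_l with (r := k) in d_w; [|lra].
  assert (scaled : t * ((mu + k * c) / 2 * (1 - t) * D)
                   <= t * (f y - f z - k * (rpow (d x z) p - rpow (d x y) p))).
  { clearbody w D; lra. }
  apply Rmult_le_reg_l in scaled; [|lra].
  assert (0 <= (1 - t) * D) by nra.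
  nra.
Qed.

Lemma penalized_min_three_point y :
  k * (rpow (d z y) p + rpow (d x z) p - rpow (d x y) p) <= f y - f z.
Proof.
  assert (H := Rle_of_forall_one_minus_mul_le _ _ (penalized_min_geodesic_step y)).
  lra.
Qed.

End OneMinimizer.

Lemma penalized_min_pair x y xp yp :
  penalized_min x xp -> penalized_min y yp ->
  2 * rpow (d xp yp) p + rpow (d x xp) p + rpow (d y yp) p
    - rpow (d x yp) p - rpow (d y xp) p <= 0.
Proof.
  intros xp_min yp_min.
  assert (Hx := penalized_min_three_point x xp xp_min yp).
  assert (Hy := penalized_min_three_point y yp yp_min xp).
  rewrite (d_sym yp xp) in Hy.
  apply Rmult_le_reg_l with k; lra.
Qed.

End PenalizedMinimizers.

Theorem mainTheorem13 (G : Type) (d : G -> G -> R) (p c lam mu : R) (f : G -> R) :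
  is_metric d -> uniquely_geodesic d -> boundedly_compact d ->
  1 < p -> 0 < c -> p_uniformly_convex d p c ->
  0 < lam ->
  lower_semicontinuous d f -> strongly_convex d p mu f ->
  mu >= (2 - c) / (p * Rpower lam (p - 1)) ->
  (forall x xp, is_prox d p lam f x xp ->
     forall y, 4 / (c * p * Rpower lam (p - 1)) * Delta_pc d p c xp x xp y <= f y - f xp) /\
  (forall x y xp yp, is_prox d p lam f x xp -> is_prox d p lam f y yp ->
     let alpha := c / (2 + c) in
     rpow (d xp yp) p <= rpow (d x y) p - (1 - alpha) / alpha * psi_pc d p c x y xp yp).
Proof.
  intros (_ & d_eq0 & d_sym & _) d_geo _ p_gt1 c_gt0 d_uc lam_gt0 _ f_sc mu_large.
  assert (P_gt0 : 0 < Rpower lam (p - 1)) by apply exp_pos.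
  set (P := Rpower lam (p - 1)) in *.
  assert (k_gt0 : 0 < 1 / (p * P)) by (apply Rdiv_lt_0_compat; nra).
  assert (modulus : 2 * (1 / (p * P)) <= mu + 1 / (p * P) * c).
  { replace ((2 - c) / (p * P)) with ((2 - c) * (1 / (p * P))) in mu_large
      by (field; nra); lra. }
  assert (geo : forall x y, exists g, is_geodesic d x y g)
    by (intros x y; apply d_geo).
  (* [is_prox d p lam f] is convertible to [penalized_min] with [k = 1 / (p P)]. *)
  split.
  - intros x xp xp_prox y.
    assert (H := penalized_min_three_point _ _ _ _ _ _ _ d_sym geo d_uc f_sc
                   k_gt0 modulus x xp xp_prox y).
    unfold Delta_pc; rewrite (proj2 (d_eq0 xp xp) eq_refl), rpow_0.
    replace (4 / (c * p * P) * (c / 4 * (rpow (d xp y) p + rpow (d x xp) p - 0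
               - rpow (d x y) p)))
      with (1 / (p * P) * (rpow (d xp y) p + rpow (d x xp) p - rpow (d x y) p))
      by (field; nra).
    exact H.
  - intros x y xp yp xp_prox yp_prox alpha.
    assert (H := penalized_min_pair _ _ _ _ _ _ _ d_sym geo d_uc f_sc k_gt0
                   modulus x y xp yp xp_prox yp_prox).
    unfold alpha, psi_pc.
    replace ((1 - c / (2 + c)) / (c / (2 + c))) with (2 / c) by (field; lra).
    replace (2 / c * (c / 2 * (rpow (d x xp) p + rpow (d y yp) p + rpow (d xp yp) p
               + rpow (d x y) p - rpow (d y xp) p - rpow (d x yp) p)))
      with (rpow (d x xp) p + rpow (d y yp) p + rpow (d xp yp) p + rpow (d x y) p
              - rpow (d y xp) p - rpow (d x yp) p) by (field; lra).
    lra.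
Qed.
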